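(* For every integer $t\ge 2$ and every $\varepsilon>0$ the following holds for infinitely many $k$. There exist a vertex set $V$ containing a terminal set $K$ with $|K|=k$ and $k=o(|V|)$, and a family $\mathcal G$ of unweighted undirected graphs on vertex set $V$, each with $O(|V|)$ edges, such that any data structure (i.e., any encoding map $f$ from $\mathcal G$ to bit strings together with a decoding procedure that, given only $f(G)$, outputs for every pair $x,x'\in K$ an estimate $\delta(x,x')$) which satisfies either $d_G(x,x')\le \delta(x,x')\le (t-\varepsilon)\,d_G(x,x')$ for all $x,x'\in K$ and all $G\in\mathcal G$, or $d_G(x,x')\le \delta(x,x')\le d_G(x,x')+2t-3$ for all $x,x'\in K$ and all $G\in\mathcal G$, must use $\Omega(k^{1+1/(t-1)})$ bits on some $G\in\mathcal G$.
   Context: $d_G(x,x')$ denotes the shortest-path (hop) distance between $x$ and $x'$ in the unweighted graph $G$. *)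

From mathcomp Require Import all_boot.
From Stdlib Require Import Reals.

Set Implicit Arguments.
Unset Strict Implicit.
Unset Printing Implicit Defensive.

(* An undirected unweighted simple graph on vertex set 'I_n is given by its
   edge set: a set of 2-element subsets of 'I_n. *)
Definition graph (n : nat) := {set {set 'I_n}}.

Definition simple_graph n (G : graph n) : Prop :=
  forall e, e \in G -> #|e| = 2.

Definition nedges n (G : graph n) : nat := #|G|.

Definition adj n (G : graph n) : rel 'I_n :=
  fun x y => (x != y) && ([set x; y] \in G).

(* x :: p is a walk from x to y of length size p *)
Definition walk n (G : graph n) (x y : 'I_n) (p : seq 'I_n) : Prop :=
  path (adj G) x p /\ last x p = y.

Definition connected n (G : graph n) (x y : 'I_n) : Prop :=
  exists p, walk G x y p.

Definition is_dist n (G : graph n) (x y : 'I_n) (d : nat) : Prop :=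
  (exists p, walk G x y p /\ size p = d) /\
  (forall p, walk G x y p -> (d <= size p)%N).

(* An estimate is [Some r] (a real number) or [None] (meaning +infinity).
   Since d_G(x,x') = +infinity for disconnected x,x', the sandwich
   d <= delta <= (t-eps) d forces delta = +infinity exactly in that case. *)
Definition mult_ok n (G : graph n) (x y : 'I_n) (a : R) (est : option R) : Prop :=
  match est with
  | Some r => exists d, is_dist G x y d /\ (INR d <= r)%R /\ (r <= a * INR d)%R
  | None => ~ connected G x y
  end.

Definition add_ok n (G : graph n) (x y : 'I_n) (b : R) (est : option R) : Prop :=
  match est with
  | Some r => exists d, is_dist G x y d /\ (INR d <= r)%R /\ (r <= INR d + b)%R
  | None => ~ connected G x y
  end.

(* Fix D and let k = (2(D+1))^(t-1), so that k^(1/(t-1)) = 2(D+1).  A graph of maximum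
   degree D on k vertices without cycles of length <= t and with as many edges as possible
   has at most (D+1)^(t-1) vertices of degree < D, since any two of them are within
   distance t - 1 (else they could be joined); hence it has >= kD/4 = Omega(k^(1+1/(t-1)))
   edges.  Orient it, subdivide every edge once and add isolated vertices (to get k = o(n)):
   for each subset S of its edges this gives a sparse graph G_S in which an edge uv is at
   distance 2 if uv is in S and at distance >= 2t otherwise, because min(d_S(u, .), t)
   interpolated along the subdivided edges is 1-Lipschitz and a u-v path in S - uv has
   length >= t.  Both kinds of estimates separate 2 from 2t, so the encodings of the graphs
   G_S are pairwise distinct and one of them has at least |E| bits. *)

From mathcomp Require Import all_boot.
From Stdlib Require Import Reals.
From mathcomp Require Import zify.
From Stdlib Require Import Lra.
(* [Reals] rebinds [_ ^ _] on [nat] to [Nat.pow]; restore [expn]. *)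
Import ssrnat.

Set Implicit Arguments.
Unset Strict Implicit.
Unset Printing Implicit Defensive.

Section Balls.
Variable T : finType.
Implicit Types (E : {set T * T}) (u v w x : T).

Definition nbr E x := [set w | (x, w) \in E].

Fixpoint ball E u j : {set T} :=
  if j is j'.+1 then ball E u j' :|: \bigcup_(x in ball E u j') nbr E x
  else [set u].

Definition sym_edges E := forall x y, (x, y) \in E -> (y, x) \in E.

Lemma ballS E u j : ball E u j \subset ball E u j.+1.
Proof. exact: subsetUl. Qed.

Lemma ball_le E u j j' : j <= j' -> ball E u j \subset ball E u j'.
Proof.
move=> /subnK <-; elim: (j' - j) => [|m IH] //=.
exact: subset_trans IH (ballS _ _ _).
Qed.

Lemma ball_center E u j : u \in ball E u j.
Proof. by apply: subsetP (ball_le E u (leq0n j)) _ _; rewrite set11. Qed.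

Lemma ball_step E u j x w : x \in ball E u j -> (x, w) \in E -> w \in ball E u j.+1.
Proof. by move=> xb xw; apply/setUP; right; apply/bigcupP; exists x; rewrite ?inE. Qed.

Lemma ball_succP E u j w : w \in ball E u j.+1 ->
  w \in ball E u j \/ exists2 x, x \in ball E u j & (x, w) \in E.
Proof.
case/setUP => [|/bigcupP [x xb]]; first by left.
by rewrite inE => xw; right; exists x.
Qed.

Lemma ball_subset E E' u j : E \subset E' -> ball E u j \subset ball E' u j.
Proof.
move=> sE; elim: j => [|j IH] //; apply/subsetP=> w /ball_succP [wb|[x xb xw]].
  exact: subsetP (ballS _ _ _) _ (subsetP IH _ wb).
exact: ball_step (subsetP IH x xb) (subsetP sE _ xw).
Qed.

Lemma ball_trans E u x p q : x \in ball E u p -> ball E x q \subset ball E u (p + q).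
Proof.
move=> xb; elim: q => [|q IH].
  by apply/subsetP=> w; rewrite inE addn0 => /eqP ->.
apply/subsetP=> w /ball_succP [wb|[y yb yw]]; rewrite addnS.
  exact: subsetP (ballS _ _ _) _ (subsetP IH _ wb).
exact: ball_step (subsetP IH y yb) yw.
Qed.

Lemma ball_sym E u v j : sym_edges E -> v \in ball E u j -> u \in ball E v j.
Proof.
move=> sE; elim: j v => [|j IH] v; first by rewrite !inE => /eqP ->.
case/ball_succP => [vb|[x xb xv]]; first exact: subsetP (ballS _ _ _) _ (IH _ vb).
have xv1 : x \in ball E v 1 by apply: ball_step (ball_center _ _ _) (sE _ _ xv).
by rewrite -add1n; apply: subsetP (ball_trans _ xv1) _ (IH _ xb).
Qed.

Lemma leq_card_bigcup (I : finType) (A : {pred I}) (F : I -> {set T}) :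
  #|\bigcup_(i in A) F i| <= \sum_(i in A) #|F i|.
Proof.
elim/big_ind2: _ => [|X1 n1 X2 n2 le1 le2|//]; first by rewrite cards0.
by rewrite cardsU (leq_trans (leq_subr _ _)) ?leq_add.
Qed.

Lemma card_ball E u j D : (forall x, #|nbr E x| <= D) -> #|ball E u j| <= D.+1 ^ j.
Proof.
move=> degD; elim: j => [|j IH]; first by rewrite cards1.
rewrite /= expnS mulSn cardsU (leq_trans (leq_subr _ _)) // leq_add //.
apply: leq_trans (leq_card_bigcup (ball E u j) (nbr E)) _.
apply: leq_trans (_ : _ <= \sum_(x in ball E u j) D) _; first exact: leq_sum.
by rewrite sum_nat_const mulnC leq_mul.
Qed.

End Balls.

Section Girth.
Variable T : finType.
Implicit Types (E : {set T * T}) (a b u v w x : T).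

Definition rem_edge E a b := E :\ (a, b) :\ (b, a).
Definition add_edge E u v := E :|: [set (u, v); (v, u)].

(* All cycles are longer than [t]. *)
Definition girth_gt t E :=
  [forall a, forall b, ((a, b) \in E) ==> (b \notin ball (rem_edge E a b) a t.-1)].

Lemma girth_gtP t E a b : girth_gt t E -> (a, b) \in E -> b \notin ball (rem_edge E a b) a t.-1.
Proof. by move=> /forallP /(_ a) /forallP /(_ b) /implyP. Qed.

Lemma ball_add_edge E u v a j w : w \in ball (add_edge E u v) a j ->
  [\/ w \in ball E a j,
      exists i1 i2, [/\ i1 + i2 < j, u \in ball E a i1 & w \in ball E v i2] |
      exists i1 i2, [/\ i1 + i2 < j, v \in ball E a i1 & w \in ball E u i2]].
Proof.
elim: j w => [|j IH] w; first by move=> wa; apply: Or31.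
have ltS i1 i2 : i1 + i2 < j -> i1 + i2 < j.+1 by lia.
have leS i1 i2 : i1 + i2 < j -> i1 <= j.+1 by lia.
case/ball_succP => [/IH [wb|[i1 [i2 [? ub wb]]]|[i1 [i2 [? vb wb]]]]|[x xb xw]].
- by apply: Or31; apply: subsetP (ballS _ _ _) _ wb.
- by apply: Or32; exists i1, i2; split; rewrite ?ltS.
- by apply: Or33; exists i1, i2; split; rewrite ?ltS.
case/setUP: xw xb => [xw xb|/set2P [] [-> ->] xb].
- case: (IH x xb) => [xb'|[i1 [i2 [? ub xb']]]|[i1 [i2 [? vb xb']]]].
  + by apply: Or31; apply: ball_step xb' xw.
  + by apply: Or32; exists i1, i2.+1; rewrite addnS ltnS (ball_step xb').
  + by apply: Or33; exists i1, i2.+1; rewrite addnS ltnS (ball_step xb').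
- case: (IH u xb) => [ub|[i1 [i2 [lt12 ub _]]]|[i1 [i2 [lt12 vb _]]]].
  + by apply: Or32; exists j, 0; rewrite addn0 ball_center.
  + by apply: Or32; exists i1, 0; rewrite addn0 ball_center (leq_ltn_trans (leq_addr i2 i1)) ?ltS.
  + by apply: Or31; apply: subsetP (ball_le _ _ (leS _ _ lt12)) _ vb.
- case: (IH v xb) => [vb|[i1 [i2 [lt12 ub _]]]|[i1 [i2 [lt12 vb _]]]].
  + by apply: Or33; exists j, 0; rewrite addn0 ball_center.
  + by apply: Or31; apply: subsetP (ball_le _ _ (leS _ _ lt12)) _ ub.
  + by apply: Or33; exists i1, 0; rewrite addn0 ball_center (leq_ltn_trans (leq_addr i2 i1)) ?ltS.
Qed.

Lemma girth_gt_add_edge t E u v : sym_edges E -> girth_gt t E -> (u, v) \notin E ->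
  v \notin ball E u t.-1 -> girth_gt t (add_edge E u v).
Proof.
move=> sE gE uvE vb.
have ub : u \notin ball E v t.-1 by apply: contra vb => /(ball_sym sE).
have far x y : x \notin ball E y t.-1 -> forall a b i1 i2, i1 + i2 < t.-1 ->
    (b, a) \in E -> y \in ball E a i1 -> b \in ball E x i2 -> False.
  move=> xy a b i1 i2 lt12 ba ya bx; apply: (negP xy); rewrite ball_sym //.
  have ax : a \in ball E x i2.+1 by apply: ball_step bx ba.
  by apply: subsetP (ball_le _ _ _) _ (subsetP (ball_trans i1 ax) _ ya); rewrite addSn addnC.
apply/forallP => a; apply/forallP => b; apply/implyP => /setUP [abE|new].
  have sub : rem_edge (add_edge E u v) a b \subset add_edge (rem_edge E a b) u v.
    by apply/subsetP => q; rewrite !inE => /and3P [-> -> /orP [] ->]; rewrite ?orbT.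
  have subE : rem_edge E a b \subset E by apply/subsetP => q /setD1P [_ /setD1P []].
  apply/negP => /(subsetP (ball_subset _ _ sub)) /ball_add_edge
    [|[i1 [i2 [lt12 ua bv]]]|[i1 [i2 [lt12 va bu]]]].
  - exact/negP/girth_gtP.
  - by apply: (far _ _ vb a b i1 i2 lt12 (sE _ _ abE)); apply: (subsetP (ball_subset _ _ subE)).
  - by apply: (far _ _ ub a b i1 i2 lt12 (sE _ _ abE)); apply: (subsetP (ball_subset _ _ subE)).
have sub : rem_edge (add_edge E u v) a b \subset E.
  apply/subsetP => q; rewrite !inE; case/set2P: (new) => -[-> ->];
    by case/and3P => q1 q2 /orP [//|/orP []] /eqP qe; rewrite qe eqxx ?andbF in q1 q2.
move: sub; case/set2P: new => -[-> ->] sub; [apply: contra vb | apply: contra ub];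
  exact: (subsetP (ball_subset _ _ sub)).
Qed.
End Girth.

Section DenseGirth.
Variable T : finType.
Implicit Types (E : {set T * T}) (u v x : T).

Lemma card_edges_nbr E : #|E| = \sum_x #|nbr E x|.
Proof.
rewrite -sum1_card big_mkcond /=.
rewrite (eq_bigr (fun p => (fun x y => ((x, y) \in E) : nat) p.1 p.2)) => [|[x y] _];
  last by case: ifP.
rewrite -(pair_bigA _ (fun x y => ((x, y) \in E) : nat)) /=.
by apply: eq_bigr => x _; rewrite -sum1_card [RHS]big_mkcond; apply: eq_bigr => y _; rewrite inE.
Qed.

Lemma card_low_degree E D : #|T| * D <= #|E| + #|[set x | #|nbr E x| < D]| * D.
Proof.
rewrite card_edges_nbr -!sum1_card !big_distrl /= [X in _ + X]big_mkcond -big_split /=.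
by apply: leq_sum => x _; rewrite inE mul1n; case: ltnP; rewrite ?addn0 ?leq_addl.
Qed.

Lemma card_nbr_add_edge E u v x : #|nbr (add_edge E u v) x| <= #|nbr E x| + (x == u) + (x == v).
Proof.
have sub : nbr (add_edge E u v) x \subset
    nbr E x :|: [set y | (x == u) && (y == v)] :|: [set y | (x == v) && (y == u)].
  by apply/subsetP => y; rewrite !inE => /orP [->|/orP [] /eqP [-> ->]]; rewrite ?eqxx ?orbT.
have card_if (b : bool) (w : T) : #|[set y | b && (y == w)]| = b.
  case: b; [rewrite -[RHS](cards1 w) | rewrite -[RHS](cards0 T)];
    by apply: eq_card => y; rewrite !inE.
rewrite -(card_if (x == u) v) -(card_if (x == v) u).
apply: leq_trans (subset_leq_card sub) (leq_trans (leq_card_setU _ _) _).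
by rewrite leq_add2r leq_card_setU.
Qed.

Definition admissible t D E :=
  [&& [forall x, (x, x) \notin E], [forall x, forall y, ((x, y) \in E) ==> ((y, x) \in E)],
      [forall x, #|nbr E x| <= D] & girth_gt t E].

Lemma admissibleP t D E : admissible t D E ->
  [/\ forall x, (x, x) \notin E, sym_edges E, forall x, #|nbr E x| <= D & girth_gt t E].
Proof.
case/and4P => /forallP irr /forallP symb /forallP degD gE; split => // x y.
by apply/implyP; move/forallP: (symb x).
Qed.

Lemma admissible0 t D : admissible t D set0.
Proof.
apply/and4P; split; do ?[apply/forallP => ?]; rewrite ?inE //.
by rewrite (_ : nbr set0 _ = set0) ?cards0 //; apply/setP => y; rewrite !inE.
Qed.

Lemma admissible_add_edge t D E u v : admissible t D E -> u != v -> (u, v) \notin E ->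
  #|nbr E u| < D -> #|nbr E v| < D -> v \notin ball E u t.-1 -> admissible t D (add_edge E u v).
Proof.
case/admissibleP => irr sE degD gE uv uvE du dv vb; apply/and4P; split.
- apply/forallP => x; rewrite !inE (negbTE (irr x)) /=.
  by apply/negP => /orP [] /eqP [ex ey]; rewrite -ex ey eqxx in uv.
- apply/forallP => x; apply/forallP => y; apply/implyP; rewrite !inE.
  by case/orP => [/sE ->|/orP [] /eqP [-> ->]]; rewrite ?eqxx ?orbT.
- apply/forallP => x; apply: leq_trans (card_nbr_add_edge _ _ _ _) _.
  have [->|xu] := eqVneq x u; first by rewrite (negbTE uv) addn0 addn1.
  by have [->|xv] := eqVneq x v; rewrite ?addn0 ?addn1 // degD.
- exact: girth_gt_add_edge.
Qed.

(* Take an admissible graph with the most edges: two of its vertices of degree [< D] could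
   otherwise be joined, so they all lie in a ball of radius [t - 1]. *)
Lemma dense_girth_graph t D : 2 <= t ->
  exists E, [/\ sym_edges E, forall x, (x, x) \notin E, girth_gt t E &
    #|T| * D <= #|E| + D * D.+1 ^ t.-1].
Proof.
move=> t2; have [E admE maxE] := arg_maxnP (fun E : {set T * T} => #|E|) (admissible0 t D).
have [irr sE degD gE] := admissibleP admE.
exists E; split => //.
set U := [set x | #|nbr E x| < D].
have close u v : u \in U -> v \in U -> v \in ball E u t.-1.
  rewrite !inE => du dv; have [<-|uv] := eqVneq u v; first exact: ball_center.
  have [uvE|uvE] := boolP ((u, v) \in E).
    apply: subsetP (ball_le _ _ _) _ (ball_step (ball_center _ _ 0) uvE).
    by rewrite -ltnS prednK ?(leq_trans _ t2).
  apply/negPn/negP => vb; have := maxE _ (admissible_add_edge admE uv uvE du dv vb).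
  apply/negP; rewrite -ltnNge proper_card //; apply/properP; split; first exact: subsetUl.
  by exists (u, v); rewrite ?inE ?eqxx ?orbT.
have cardU : #|U| <= D.+1 ^ t.-1.
  have [->|[u uU]] := set_0Vmem U; first by rewrite cards0.
  apply: leq_trans (subset_leq_card (_ : U \subset ball E u t.-1)) _.
    by apply/subsetP => v; apply: close.
  exact: card_ball.
by apply: leq_trans (card_low_degree E D) _; rewrite leq_add2l mulnC leq_mul2l cardU orbT.
Qed.

End DenseGirth.

Definition sym_closure (T : finType) (S : {set T * T}) := [set q | (q \in S) || ((q.2, q.1) \in S)].

Section Orientation.
Variables (k : nat) (H : {set 'I_k * 'I_k}).
Hypotheses (symH : sym_edges H) (irrH : forall x, (x, x) \notin H).

Definition upper_half := [set p in H | p.1 < p.2].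

Lemma card_upper_half : #|H| <= 2 * #|upper_half|.
Proof.
have sub : H \subset upper_half :|: [set (p.2, p.1) | p in upper_half].
  apply/subsetP => -[a b] abH; rewrite !inE abH.
  have [//|ba|/val_inj eab] := ltngtP a b.
    by apply/imsetP; exists (b, a); rewrite // inE ba symH.
  by move: (irrH a); rewrite {2}eab abH.
apply: leq_trans (subset_leq_card sub) (leq_trans (leq_card_setU _ _) _).
by rewrite mul2n -addnn leq_add2l leq_imset_card.
Qed.

Lemma upper_half_girth t (S : {set 'I_k * 'I_k}) p : girth_gt t H -> S \subset upper_half ->
  p \in upper_half -> p \notin S -> p.2 \notin ball (sym_closure S) p.1 t.-1.
Proof.
case: p => u v gH SO; rewrite inE /= => /andP [uvH uv] uvS.
have vu_not_upper : (v, u) \notin upper_half.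
  by rewrite inE /= negb_and ltnNge ltnW ?orbT.
have sub : sym_closure S \subset rem_edge H u v.
  apply/subsetP => -[a b]; rewrite !inE /= => /orP [] qS.
  - have := subsetP SO _ qS; rewrite inE /= => /andP [-> _]; rewrite andbT.
    apply/andP; split; apply/eqP => -[ea eb]; move: qS; rewrite ea eb.
    + by move/(subsetP SO); apply/negP.
    + by rewrite (negbTE uvS).
  - have := subsetP SO _ qS; rewrite inE /= => /andP [/symH -> _]; rewrite andbT.
    apply/andP; split; apply/eqP => -[ea eb]; move: qS; rewrite ea eb.
    + by rewrite (negbTE uvS).
    + by move/(subsetP SO); apply/negP.
apply: contra (girth_gtP gH uvH); exact: (subsetP (ball_subset _ _ sub)).
Qed.

End Orientation.

Lemma oriented_girth_graph (k D t : nat) : 2 <= t -> exists O : {set 'I_k * 'I_k},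
  [/\ forall p, p \in O -> p.1 < p.2,
      forall (S : {set 'I_k * 'I_k}) p, S \subset O -> p \in O -> p \notin S ->
        p.2 \notin ball (sym_closure S) p.1 t.-1
    & k * D <= 2 * #|O| + D * D.+1 ^ t.-1].
Proof.
move=> t2; have [H [symH irrH gH cardH]] := dense_girth_graph 'I_k D t2.
exists (upper_half H); split.
- by move=> p; rewrite inE => /andP [].
- by move=> S p; apply: upper_half_girth.
- by rewrite card_ord in cardH; rewrite (leq_trans cardH) // leq_add2r card_upper_half.
Qed.

Section TruncatedDistance.
Variables (T : finType) (R : {set T * T}) (u : T) (t : nat).

(* [min (d_R(u, w), t)] *)
Definition trunc_dist w := \sum_(j < t) (w \notin ball R u j).

Lemma trunc_dist_center : trunc_dist u = 0.
Proof. by rewrite /trunc_dist big1 // => j _; rewrite ball_center. Qed.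

Lemma trunc_dist_far v : v \notin ball R u t.-1 -> trunc_dist v = t.
Proof.
move=> vb; rewrite /trunc_dist (eq_bigr (fun _ => 1)) ?sum1_card ?card_ord // => j _.
have jt : j <= t.-1 by rewrite -ltnS prednK ?(leq_ltn_trans _ (ltn_ord j)).
by rewrite (contra _ vb) // => /(subsetP (ball_le _ _ jt)).
Qed.

Lemma trunc_dist_lipschitz x w : (x, w) \in R -> trunc_dist w <= (trunc_dist x).+1.
Proof.
move=> xw; rewrite /trunc_dist; case: t => [|t']; first by rewrite !big_ord0.
rewrite big_ord_recl [X in _ <= X.+1]big_ord_recr /=.
have le_shift :
    \sum_(j < t') (w \notin ball R u (lift ord0 j)) <= \sum_(j < t') (x \notin ball R u j).
  apply: leq_sum => j _; case: (boolP (x \in ball R u j)) => [xb|_]; last exact: leq_b1.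
  by rewrite /= (ball_step xb xw).
by apply: leq_trans (leq_add (leq_b1 _) le_shift) _; rewrite add1n ltnS leq_addr.
Qed.

End TruncatedDistance.

Lemma eq_set2 (T : finType) (a b c d : T) : [set a; b] = [set c; d] ->
  (a = c /\ b = d) \/ (a = d /\ b = c).
Proof.
move=> e; have := set21 a b; have := set22 a b; have := set21 c d; have := set22 c d.
rewrite -{1 2}e {3 4}e !inE.
case/orP => /eqP bd; case/orP => /eqP ac; case/orP => /eqP cb; case/orP => /eqP da; subst => //.
all: by [left | right].
Qed.

Lemma walk_lipschitz n (G : graph n) (phi : 'I_n -> nat) :
  (forall z z', adj G z z' -> phi z' <= (phi z).+1) ->
  forall x y s, walk G x y s -> phi y <= phi x + size s.
Proof.
move=> phiL x y s [+ <-]; elim: s x => [|w s IH] x /=; first by rewrite addn0.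
case/andP => /phiL xw /IH; rewrite addnS => /leq_trans; apply; rewrite -addSn leq_add2r.
exact: xw.
Qed.

Section Subdivision.
Variables (k Lp M : nat).
Local Notation L := Lp.+1.
Implicit Types (S : {set 'I_k * 'I_k}) (p : 'I_k * 'I_k).

Definition sub_vertex := ('I_k + ('I_k * 'I_k) * 'I_L)%type.
Definition sub_order := #|{: sub_vertex}| + M.
Definition embed (x : sub_vertex) : 'I_sub_order := widen_ord (leq_addr M _) (enum_rank x).
Definition terminal (a : 'I_k) := embed (inl a).
Definition terminals := terminal @: [set: 'I_k].

(* The pair [p] of [S] becomes the path [node p 0 = p.1, node p 1, ..., node p L = p.2];
   the [M] vertices of ['I_sub_order] outside the range of [embed] stay isolated. *)
Definition node (p : 'I_k * 'I_k) (j : nat) : sub_vertex :=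
  if j == 0 then inl p.1 else if j < L then inr (p, inord j) else inl p.2.

Definition subdivision (S : {set 'I_k * 'I_k}) : graph sub_order :=
  [set [set embed (node pj.1 pj.2); embed (node pj.1 pj.2.+1)]
     | pj : ('I_k * 'I_k) * 'I_L in setX S [set: 'I_L]].

Lemma embed_inj : injective embed.
Proof. by move=> x y /(congr1 val) /= /val_inj /enum_rank_inj. Qed.

Lemma card_terminals : #|terminals| = k.
Proof. by rewrite card_imset ?cardsT ?card_ord // => a b /embed_inj []. Qed.

Lemma nedges_subdivision S : nedges (subdivision S) <= sub_order.
Proof.
apply: leq_trans (leq_imset_card _ _) _; rewrite cardsX cardsT card_ord.
have le_S : #|S| <= k * k by rewrite (leq_trans (max_card _)) // card_prod card_ord.
rewrite /sub_order card_sum !card_prod !card_ord (leq_trans _ (leq_addr M _)) //.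
by rewrite (leq_trans _ (leq_addl k _)) // leq_mul2r le_S orbT.
Qed.

Definition interp (ps : 'I_k -> nat) (x : sub_vertex) : nat :=
  match x with
  | inl a => L * ps a
  | inr (p, s) => (L - s) * ps p.1 + s * ps p.2
  end.

(* Scaled by [L] to stay in [nat]; [0] off the range of [embed]. *)
Definition pot ps (z : 'I_sub_order) : nat :=
  if [pick x | embed x == z] is Some x then interp ps x else 0.

Lemma interp_node ps p j : j <= L -> interp ps (node p j) = (L - j) * ps p.1 + j * ps p.2.
Proof.
rewrite /node; case: j => [|j] jL /=; first by rewrite subn0 mul0n addn0.
case: ifP => [jL'|/negbT]; first by rewrite /= inordK.
by rewrite -leqNgt => Lj; rewrite (@anti_leq j.+1 L) ?jL // subnn mul0n.
Qed.

Lemma pot_embed ps x : pot ps (embed x) = interp ps x.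
Proof. by rewrite /pot; case: pickP => [y /eqP /embed_inj -> //|/(_ x)]; rewrite eqxx. Qed.

Lemma pot_lipschitz ps S : (forall p, p \in S -> ps p.2 <= (ps p.1).+1 /\ ps p.1 <= (ps p.2).+1) ->
  forall z z', adj (subdivision S) z z' -> pot ps z' <= (pot ps z).+1.
Proof.
move=> psS z z' /andP [_ /imsetP [[p j] /setXP [pS _] /= e]].
have [le21 le12] := psS p pS.
have eLj : L - j = (L - j.+1).+1 by rewrite subnSK.
have jL : j <= L by apply: ltnW.
by case: (eq_set2 e) => -[-> ->]; rewrite !pot_embed !interp_node // eLj !mulSn; lia.
Qed.

Lemma subdivision_walk_long t S u v s : v \notin ball (sym_closure S) u t.-1 ->
  walk (subdivision S) (terminal u) (terminal v) s -> L * t <= size s.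
Proof.
move=> vb ws; pose ps := trunc_dist (sym_closure S) u t.
have psS p : p \in S -> ps p.2 <= (ps p.1).+1 /\ ps p.1 <= (ps p.2).+1.
  by case: p => a b abS; split; apply: trunc_dist_lipschitz; rewrite inE /= abS ?orbT.
have := walk_lipschitz (pot_lipschitz psS) ws.
by rewrite !pot_embed /= /ps trunc_dist_center trunc_dist_far // muln0.
Qed.

Hypothesis Lp_gt0 : 0 < Lp.

Lemma node_neq p j : j < L -> node p j != node p j.+1.
Proof.
rewrite /node; case: j => [|j] jL /=; first by rewrite ltnS Lp_gt0.
rewrite jL; case: ifP => // jL'; apply/negP => /eqP [] /(congr1 (@nat_of_ord _)).
by rewrite inordK // inordK //; lia.
Qed.

Lemma subdivision_simple S : simple_graph (subdivision S).
Proof. by move=> _ /imsetP [[p j] _ ->]; rewrite cards2 (inj_eq embed_inj) node_neq. Qed.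

Lemma subdivision_adj S p j : p \in S -> j < L ->
  adj (subdivision S) (embed (node p j)) (embed (node p j.+1)).
Proof.
move=> pS jL; rewrite /adj (inj_eq embed_inj) node_neq //=.
by apply/imsetP; exists (p, Ordinal jL); rewrite // inE pS inE.
Qed.

Lemma subdivision_walk S p : p \in S ->
  walk (subdivision S) (terminal p.1) (terminal p.2) [seq embed (node p j) | j <- iota 1 L].
Proof.
move=> pS; suff path_from i m : i + m <= L ->
    walk (subdivision S) (embed (node p i)) (embed (node p (i + m)))
      [seq embed (node p j) | j <- iota i.+1 m].
  by have := path_from 0 L (leqnn _); rewrite /node /= ltnn.
elim: m i => [|m IH] i im; first by split; rewrite ?addn0.
have := IH i.+1; rewrite addSn -addnS => /(_ im) [pth lst].
split => //=; rewrite pth andbT subdivision_adj //.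
by rewrite (leq_trans _ im) // addnS ltnS leq_addr.
Qed.

End Subdivision.

(* The binary numeral of [s] preceded by a 1. *)
Fixpoint bin_code (s : seq bool) : nat := if s is b :: s' then b + (bin_code s').*2 else 1.

Lemma bin_code_gt0 s : 0 < bin_code s.
Proof. by elim: s => [|b s IH] //=; rewrite addn_gt0 double_gt0 IH orbT. Qed.

Lemma bin_code_lt s : bin_code s < 2 ^ (size s).+1.
Proof. by elim: s => [|b s IH] //=; rewrite expnS mul2n; case: b; lia. Qed.

Lemma bin_code_inj : injective bin_code.
Proof.
elim=> [|b1 s1 IH] [|b2 s2] //= e.
- by move: e (bin_code_gt0 s2); case: b2; lia.
- by move: e (bin_code_gt0 s1); case: b1; lia.
have [-> /IH ->] : b1 = b2 /\ bin_code s1 = bin_code s2 by case: b1 b2 e => [] [] /=; lia.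
by [].
Qed.

Lemma injective_code_long (T : finType) (A : {set T}) (g : T -> seq bool) m :
  {in A &, injective g} -> 2 ^ m <= #|A| -> exists2 a, a \in A & m <= size (g a).
Proof.
move=> g_inj A_big; have [/exists_inP [a aA long]|/exists_inPn short] :=
  boolP [exists a in A, m <= size (g a)]; first by exists a.
suff : #|A| < 2 ^ m by rewrite ltnNge A_big.
pose code a := bin_code (g a).
have uniq_codes : uniq [seq code a | a <- enum A].
  rewrite map_inj_in_uniq ?enum_uniq // => a b; rewrite !mem_enum => aA bA.
  by move/bin_code_inj; apply: g_inj.
have codes_range : {subset [seq code a | a <- enum A] <= iota 1 (2 ^ m).-1}.
  move=> _ /mapP [a + ->]; rewrite mem_enum => /short; rewrite -ltnNge => ltm.
  rewrite mem_iota bin_code_gt0 add1n prednK ?expn_gt0 //.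
  exact: leq_trans (bin_code_lt _) (leq_pexp2l _ ltm).
rewrite cardE -(size_map code); apply: leq_ltn_trans (uniq_leq_size uniq_codes codes_range) _.
by rewrite size_iota ltn_predL expn_gt0.
Qed.

Lemma no_common_estimate n (G1 G2 : graph n) x y (l t : nat) (eps : R) (e : option R) :
  x != y -> (2 <= l)%N -> (2 <= t)%N -> (0 < eps)%R ->
  (exists s, walk G1 x y s /\ size s = l) ->
  (forall s, walk G2 x y s -> (l * t <= size s)%N) ->
  ~ ((mult_ok G1 x y (INR t - eps) e /\ mult_ok G2 x y (INR t - eps) e) \/
     (add_ok G1 x y (2 * INR t - 3) e /\ add_ok G2 x y (2 * INR t - 3) e)).
Proof.
move=> xy l2 t2 eps0 [s1 [ws1 sl]] long; subst l.
have bounds d1 d2 : is_dist G1 x y d1 -> is_dist G2 x y d2 ->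
    [/\ (1 <= INR d1 <= INR (size s1))%R & (INR (size s1) * INR t <= INR d2)%R].
  move=> [[p1 [wp1 <-]] min1] [[p2 [wp2 <-]] _]; rewrite -mult_INR.
  split; last by apply/le_INR/leP/long.
  split; last by apply/le_INR/leP/min1.
  apply/(le_INR 1)/leP; case: p1 wp1 {min1} => [[_ /= exy]|//].
  by rewrite exy eqxx in xy.
have l2R : (2 <= INR (size s1))%R by have := le_INR 2 _ (leP l2); simpl; lra.
have t2R : (2 <= INR t)%R by have := le_INR 2 _ (leP t2); simpl; lra.
case: e => [r|]; last by case=> -[ok1 _]; apply: ok1; exists s1.
case=> -[[d1 [dist1 [r1l r1u]]] [d2 [dist2 [r2l r2u]]]];
  have [[d1_ge1 d1_le] long2] := bounds _ _ dist1 dist2.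
(* [d2 <= r <= (t - eps) d1 < t l <= d2], resp. [l t <= d2 <= r <= l + 2t - 3 < l t]. *)
- have : (INR d1 * INR t <= INR (size s1) * INR t)%R by apply: Rmult_le_compat_r; lra.
  have : (eps <= eps * INR d1)%R.
    by rewrite -[X in (X <= _)%R]Rmult_1_r; apply: Rmult_le_compat_l; lra.
  nra.
- have : (0 <= (INR (size s1) - 2) * (INR t - 1))%R by apply: Rmult_le_pos; lra.
  nra.
Qed.

Lemma INR_expn m n : INR (m ^ n) = (INR m ^ n)%R.
Proof. by elim: n => [|n IH] //; rewrite expnS mult_INR IH. Qed.

Lemma Rpower_expn_pred m t : (0 < m)%N -> (2 <= t)%N ->
  Rpower (INR (m ^ t.-1)) (1 + 1 / (INR t - 1)) = (INR (m ^ t.-1) * INR m)%R.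
Proof.
move=> m0 t2; have m0R : (0 < INR m)%R by apply/(lt_INR 0)/ltP.
have tpred : INR t.-1 = (INR t - 1)%R by rewrite -(prednK (ltnW t2)) S_INR /=; lra.
have t1 : (INR t - 1 <> 0)%R.
  by rewrite -tpred; apply/not_0_INR/eqP; rewrite -lt0n -ltnS prednK ?(ltnW t2).
have k_pow : INR (m ^ t.-1) = Rpower (INR m) (INR t.-1) by rewrite Rpower_pow // INR_expn.
rewrite Rpower_plus Rpower_1; last by rewrite k_pow; apply: exp_pos.
congr (_ * _)%R; rewrite k_pow Rpower_mult tpred.
by rewrite (_ : (INR t - 1) * (1 / (INR t - 1)) = 1)%R ?Rpower_1 //; field.
Qed.

Lemma leq_expn_pred m t : (0 < m)%N -> (2 <= t)%N -> (m <= m ^ t.-1)%N.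
Proof. by move=> m0 t2; rewrite -{1}(expn1 m) leq_pexp2l // -ltnS prednK // ltnW. Qed.

Lemma bits_lower_bound (D t o s : nat) : (0 < D)%N -> (2 <= t)%N ->
  ((2 * D.+1) ^ t.-1 * D <= 2 * o + D * D.+1 ^ t.-1)%N -> (o <= s)%N ->
  (1 / 16 * Rpower (INR ((2 * D.+1) ^ t.-1)) (1 + 1 / (INR t - 1)) <= INR s)%R.
Proof.
move=> D0 t2 cardO os; rewrite Rpower_expn_pred //.
set k := (2 * D.+1) ^ t.-1.
have k_big : (2 * D.+1 ^ t.-1 <= k)%N.
  by rewrite /k expnMn leq_mul2r leq_expn_pred ?orbT.
have kD : (k * D <= 4 * s)%N by have := leq_mul (leqnn D) k_big; lia.
have kDR : (INR k * INR D <= 4 * INR s)%R.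
  by have := le_INR _ _ (leP kD); rewrite !mult_INR /=; lra.
have D1 : (1 <= INR D)%R by apply/(le_INR 1)/leP.
have : (0 <= INR k * (INR D - 1))%R by apply: Rmult_le_pos; [apply: pos_INR | lra].
rewrite mult_INR [INR D.+1]S_INR (_ : INR 2 = 2%R); [nra | simpl; lra].
Qed.

Section Oracles.
Variables (n : nat) (F : {set graph n}) (K : {set 'I_n}).
Variables (f : graph n -> seq bool) (dec : seq bool -> 'I_n -> 'I_n -> option R).

Definition mult_oracle (a : R) :=
  forall G, G \in F -> forall x y, x \in K -> y \in K -> mult_ok G x y a (dec (f G) x y).

Definition add_oracle (b : R) :=
  forall G, G \in F -> forall x y, x \in K -> y \in K -> add_ok G x y b (dec (f G) x y).

End Oracles.

Section Encoding.
Variables (t k M : nat) (eps : R) (O : {set 'I_k * 'I_k}).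
Implicit Types (A B S : {set 'I_k * 'I_k}) (p : 'I_k * 'I_k).
Hypotheses (t2 : (2 <= t)%N) (eps0 : (0 < eps)%R) (O_lt : forall p, p \in O -> (p.1 < p.2)%N).
Hypothesis O_girth : forall S p, S \subset O -> p \in O -> p \notin S ->
  p.2 \notin ball (sym_closure S) p.1 t.-1.

Local Notation family := [set subdivision 1 M S | S in powerset O].
Local Notation K := (terminals k 1 M).

Lemma subdivision_encoding_inj f dec :
  mult_oracle family K f dec (INR t - eps) \/ add_oracle family K f dec (2 * INR t - 3) ->
  {in powerset O &, injective (fun S => f (subdivision 1 M S))}.
Proof.
move=> sound.
have separated A B p : A \subset O -> B \subset O -> p \in A -> p \notin B ->
    f (subdivision 1 M A) != f (subdivision 1 M B).
  move=> AO BO pA pB; apply/eqP => same; have pO := subsetP AO _ pA.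
  have [GA GB] : subdivision 1 M A \in family /\ subdivision 1 M B \in family.
    by split; apply: imset_f; rewrite powersetE.
  pose x := terminal 1 M p.1; pose y := terminal 1 M p.2.
  have [xK yK] : x \in K /\ y \in K by split; apply: imset_f.
  apply: (@no_common_estimate _ (subdivision 1 M A) (subdivision 1 M B) x y 2 t eps
    (dec (f (subdivision 1 M A)) x y)) => //.
  - by rewrite /terminal (inj_eq (@embed_inj _ _ _)) /= neq_ltn O_lt.
  - by exists [seq embed M (node 1 p j) | j <- iota 1 2]; split => //; apply: subdivision_walk.
  - by move=> s; apply: subdivision_walk_long; apply: O_girth.
  - by case: sound => h; [left | right]; (split; [apply: h | rewrite same; apply: h]).
move=> A B; rewrite !powersetE => AO BO same; apply/setP => p.
apply/idP/idP => [pA|pB]; apply/negPn/negP.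
- by move=> pB; move: (separated A B p AO BO pA pB); rewrite same eqxx.
- by move=> pA; move: (separated B A p BO AO pB pA); rewrite same eqxx.
Qed.

End Encoding.

Theorem theorem1p5 :
  forall (t : nat) (eps : R), (2 <= t)%N -> (0 < eps)%R ->
  exists C c : R, (0 < C)%R /\ (0 < c)%R /\
  forall (N : nat) (delta : R), (0 < delta)%R ->
  exists (k n : nat) (K : {set 'I_n}) (F : {set graph n}),
    (N <= k)%N /\ #|K| = k /\ (INR k <= delta * INR n)%R /\
    (forall G, G \in F -> simple_graph G /\ (INR (nedges G) <= C * INR n)%R) /\
    forall (f : graph n -> seq bool) (dec : seq bool -> 'I_n -> 'I_n -> option R),
      ((forall G, G \in F -> forall x y, x \in K -> y \in K ->
          mult_ok G x y (INR t - eps)%R (dec (f G) x y)) \/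
       (forall G, G \in F -> forall x y, x \in K -> y \in K ->
          add_ok G x y (2 * INR t - 3)%R (dec (f G) x y))) ->
      exists G, G \in F /\
        (c * Rpower (INR k) (1 + 1 / (INR t - 1)) <= INR (size (f G)))%R.
Proof.
move=> t eps t2 eps0; exists 1%R, (1 / 16)%R; split; [lra | split; [lra |]].
move=> N delta delta0; pose D := N.+1; pose k := (2 * D.+1) ^ t.-1.
have [O [O_lt O_girth cardO]] := oriented_girth_graph k D t2.
have [M Mbig] := INR_unbounded (INR k / delta).
exists k, (sub_order k 1 M), (terminals k 1 M), [set subdivision 1 M S | S in powerset O].
split; first by apply: leq_trans (leq_expn_pred (m := 2 * D.+1) _ t2) => //; rewrite /D; lia.
split; first exact: card_terminals.
split.
  have Mn : (INR M <= INR (sub_order k 1 M))%R by apply/le_INR/leP/leq_addl.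
  apply: Rle_trans (_ : delta * (INR k / delta) <= _)%R; first by right; field; lra.
  by apply: Rmult_le_compat_l; lra.
split.
  move=> _ /imsetP [S _ ->]; rewrite Rmult_1_l; split; first exact: subdivision_simple.
  exact/le_INR/leP/nedges_subdivision.
move=> f dec sound.
have [S SO long] := injective_code_long (subdivision_encoding_inj t2 eps0 O_lt O_girth sound)
  (eq_leq (esym (card_powerset O))).
exists (subdivision 1 M S); split; first exact: imset_f.
exact: bits_lower_bound (ltn0Sn N) t2 cardO long.
Qed.
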